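(* Let $I\subset S=K[x_1,\dots,x_n]$ be a monomial ideal generated in a single degree which has linear quotients. Then the first homological shift ideal $\mathrm{HS}_1(I)$ has linear quotients.
   Context: A monomial ideal $I$ has linear quotients if for some ordering $u_1,\dots,u_m$ of its minimal monomial generating set $G(I)$ all colon ideals $(u_1,\dots,u_{i-1}):u_i$ are generated by variables. For a monomial ideal $I$ with minimal multigraded free resolution $\mathbb F$, write $F_k=\bigoplus_{j=1}^{\beta_k(I)}S(-\mathbf a_{kj})$ with $\mathbf a_{kj}\in\mathbb Z_{\ge0}^n$; the $k$th homological shift ideal $\mathrm{HS}_k(I)$ is the monomial ideal generated by the monomials $\mathbf x^{\mathbf a_{kj}}=x_1^{a_1}\cdots x_n^{a_n}$, $j=1,\dots,\beta_k(I)$. (So $\mathrm{HS}_0(I)=I$.) *)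

From HB Require Import structures.
From mathcomp Require Import all_boot all_order all_algebra.
Set Implicit Arguments. Unset Strict Implicit. Unset Printing Implicit Defensive.
Import GRing.Theory.

(* Monomials of S = K[x_1..x_n] represented by their exponent vectors. *)
Definition mon (n : nat) := {ffun 'I_n -> nat}.

Definition mon1 (n : nat) : mon n := [ffun => 0%N].
Definition mmul n (u v : mon n) : mon n := [ffun k => (u k + v k)%N].
Definition mdiv n (u v : mon n) : bool := [forall k, u k <= v k].
Definition mdeg n (u : mon n) : nat := (\sum_(k < n) u k)%N.
(* a / x_k (used only when a_k > 0) *)
Definition mdivvar n (a : mon n) (k : 'I_n) : mon n :=
  [ffun i => if i == k then (a i).-1 else a i].

(* A monomial ideal is identified with its set of monomials (it is spanned
   by them). *)
Definition monideal (n : nat) := mon n -> Prop.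

Definition gen n (s : seq (mon n)) : monideal n := fun v => has (fun u => mdiv u v) s.

Definition is_mingens n (J : monideal n) (s : seq (mon n)) : Prop :=
  [/\ uniq s, (forall v, J v <-> gen s v) &
      (forall u w, u \in s -> w \in s -> mdiv u w -> u = w)].

Definition colon n (J : monideal n) (u : mon n) : monideal n := fun v => J (mmul v u).

Definition var_generated n (J : monideal n) : Prop :=
  exists V : seq 'I_n, forall v, J v <-> (exists2 k, k \in V & (0 < v k)%N).

Definition linear_quotients n (J : monideal n) : Prop :=
  exists s : seq (mon n), is_mingens J s /\
    forall i, (i < size s)%N -> var_generated (colon (gen (take i s)) (nth (mon1 n) s i)).

(* Minimal multigraded free resolution of I with G(I) = G = [u_0..u_{m-1}]:
   F_0 = (+)_j S(-u_j) --> I, e_j |-> u_j, and F_1 is a minimal free cover of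
   Syz = ker(F_0 -> I); hence beta_{1,a}(I) = dim_K (Syz / m Syz)_a.
   The degree-a part of F_0 has basis {x^(a-u_j) e_j | u_j divides x^a}, so
   an element of F_0 of degree a is a coefficient vector c : 'I_m -> K
   supported on those j; it lies in Syz_a iff sum_j c_j = 0.
   Multiplication by x_k maps (F_0)_(a/x_k) to (F_0)_a keeping coefficients,
   so (m Syz)_a = sum_{k, a_k>0} Syz_(a/x_k). *)
Definition in_syz (K : fieldType) n (G : seq (mon n)) (b : mon n)
    (c : 'I_(size G) -> K) : Prop :=
  (forall j, c j != 0%R -> mdiv (nth (mon1 n) G j) b) /\ (\sum_(j < size G) c j)%R = 0%R.

Definition betti1_nz (K : fieldType) n (G : seq (mon n)) (a : mon n) : Prop :=
  exists c : 'I_(size G) -> K, @in_syz K n G a c /\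
    ~ (exists d : 'I_n -> 'I_(size G) -> K,
         (forall k, (0 < a k)%N -> @in_syz K n G (mdivvar a k) (d k)) /\
         (forall k, a k = 0%N -> forall j, d k j = 0%R) /\
         (forall j, c j = (\sum_(k < n) d k j)%R)).

Definition HS1 (K : fieldType) n (G : seq (mon n)) : monideal n :=
  fun v => exists2 a, betti1_nz K G a & mdiv a v.

(* Let u_0, ..., u_(m-1) be a linear quotient order of G(I), all of degree d.  A multidegree
   with beta_1 <> 0 is divisible by two distinct generators, and conversely every x_k u_j that
   is divisible by some u_i, i <> j, is such a multidegree (a minimal syzygy e_j - e_i).  By the
   linear quotients, every monomial divisible by two of u_0, ..., u_(j-1) is a multiple of some
   x_k u_i, i < j, divisible by exactly one of u_0, ..., u_(i-1).  So HS_1(I) is generated, in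
   degree d + 1, by these x_k u_i listed by increasing i, and this list has linear quotients:
   a monomial divisible by exactly one earlier generator u_c can be moved, one variable at a
   time, towards any other earlier generator u_e while acquiring a second divisor. *)

From mathcomp Require Import all_boot all_order all_algebra.
From mathcomp Require Import zify.
Set Implicit Arguments. Unset Strict Implicit. Unset Printing Implicit Defensive.
Import GRing.Theory.

Section Monomials.

Variable n : nat.
Implicit Types u v w : mon n.

Lemma mdivP u v : reflect (forall k, u k <= v k) (mdiv u v).
Proof. exact: (iffP forallP). Qed.

Lemma mdiv_refl u : mdiv u u.
Proof. by apply/mdivP. Qed.

Lemma mdiv_trans u v w : mdiv u v -> mdiv v w -> mdiv u w.
Proof. by move=> /mdivP uv /mdivP vw; apply/mdivP => k; apply: leq_trans (uv k) (vw k). Qed.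

Lemma mdiv_anti u v : mdiv u v -> mdiv v u -> u = v.
Proof. by move=> /mdivP uv /mdivP vu; apply/ffunP => k; apply/eqP; rewrite eqn_leq uv vu. Qed.

Lemma mdiv_eq u v : mdiv u v -> mdeg u = mdeg v -> u = v.
Proof.
move=> /mdivP uv deg_uv.
have deg_v : mdeg v = mdeg u + \sum_(k < n) (v k - u k).
  by rewrite /mdeg -big_split; apply: eq_bigr => k _ /=; rewrite subnKC.
have : \sum_(k < n) (v k - u k) == 0 by rewrite -(eqn_add2l (mdeg u)) -deg_v deg_uv addn0.
rewrite sum_nat_eq0 => /forallP uv0; apply/ffunP => k.
by apply/eqP; rewrite eqn_leq uv -subn_eq0 (implyP (uv0 k)).
Qed.

Definition mmulvar w (k : 'I_n) : mon n := [ffun i => w i + (i == k)].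

Lemma mmulvarE w k i : mmulvar w k i = w i + (i == k).
Proof. by rewrite ffunE. Qed.

Lemma mdiv_mmulvar w k : mdiv w (mmulvar w k).
Proof. by apply/mdivP => i; rewrite mmulvarE leq_addr. Qed.

Lemma mdiv_mmulvar2 u v k : mdiv u v -> mdiv (mmulvar u k) (mmulvar v k).
Proof. by move=> /mdivP uv; apply/mdivP => i; rewrite !mmulvarE leq_add2r. Qed.

Lemma mdiv_mmulvarl u w k : mdiv u w -> u k < w k -> mdiv (mmulvar u k) w.
Proof.
move=> /mdivP uw uk_wk; apply/mdivP => i; rewrite mmulvarE.
by case: eqP => [-> | _]; rewrite ?addn1 ?addn0.
Qed.

Lemma mmulvar_inj w : injective (mmulvar w).
Proof.
move=> k l /ffunP /(_ k); rewrite !mmulvarE eqxx => /eqP.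
by rewrite eqn_add2l eq_sym => /eqP; case: eqP.
Qed.

Lemma mdeg_mmulvar w k : mdeg (mmulvar w k) = (mdeg w).+1.
Proof.
rewrite /mdeg (eq_bigr _ (fun i _ => mmulvarE w k i)) big_split /= -addn1; congr (_ + _).
by rewrite (bigD1 k) //= eqxx big1 // => i /negbTE ->.
Qed.

Lemma mdivvar_mmulvar w k : mdivvar (mmulvar w k) k = w.
Proof.
by apply/ffunP => i; rewrite ffunE mmulvarE; case: eqP => [->|] /=; rewrite ?addn1 ?addn0.
Qed.

(* Equal degrees force [x_t u = x_s v], where [t] is a coordinate at which [v] fails to
   divide [w]. *)
Lemma mdiv_mmulvar_exchange u v w s :
  mdeg u = mdeg v -> mdiv u (mmulvar v s) -> mdiv u w -> ~~ mdiv v w ->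
  exists2 t, w t < v t & mdiv v (mmulvar w t).
Proof.
move=> deg_uv /mdivP u_xv /mdivP uw v_w.
have [t wt_vt] : exists t, w t < v t by move/forallPn: v_w => [t]; rewrite -ltnNge; exists t.
exists t => //.
have ts : t != s.
  apply/eqP => tsE; move/negP: v_w; apply; suff <- : u = v by apply/mdivP.
  apply: mdiv_eq deg_uv; apply/mdivP => i; have := u_xv i; rewrite mmulvarE.
  case: eqP => [-> _ | _]; last by rewrite addn0.
  by rewrite -tsE ltnW // (leq_ltn_trans (uw t)).
have xv_xu : mmulvar v s = mmulvar u t.
  apply/esym/mdiv_eq; last by rewrite !mdeg_mmulvar deg_uv.
  apply/mdivP => i; rewrite mmulvarE; have := u_xv i; rewrite mmulvarE.
  case: (eqVneq i t) => [-> | _]; last by rewrite addn0.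
  by rewrite (negbTE ts) !addn0 addn1 => _; apply: leq_ltn_trans (uw t) wt_vt.
apply: mdiv_trans (mdiv_mmulvar v s) _.
by rewrite xv_xu; apply: mdiv_mmulvar2; apply/mdivP.
Qed.

End Monomials.

Section Generators.

Variable n : nat.
Implicit Types (u v w : mon n) (s t : seq (mon n)).

Lemma gen_mem s u v : u \in s -> mdiv u v -> gen s v.
Proof. by move=> us uv; apply/hasP; exists u. Qed.

Lemma gen_mdiv s u v : gen s u -> mdiv u v -> gen s v.
Proof. by move=> /hasP [p ps pu] uv; apply: gen_mem ps (mdiv_trans pu uv). Qed.

Lemma gen_catl s t v : gen s v -> gen (s ++ t) v.
Proof. by rewrite /gen has_cat => ->. Qed.

Lemma gen_catr s t v : gen t v -> gen (s ++ t) v.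
Proof. by rewrite /gen has_cat orbC => ->. Qed.

Lemma mingens_sub (J : monideal n) s t : is_mingens J s -> is_mingens J t -> {subset s <= t}.
Proof.
move=> [_ Js s_min] [_ Jt _] x xs.
have /Jt/hasP [y yt yx] : J x by apply/Js/(gen_mem xs)/mdiv_refl.
have /Js/hasP [z zs zy] : J y by apply/Jt/(gen_mem yt)/mdiv_refl.
have zx := s_min z x zs xs (mdiv_trans zy yx).
by rewrite zx in zy; rewrite -(mdiv_anti yx zy).
Qed.

(* The colon ideal is generated by the [x_t] with [x_t w] in the ideal: if [p | v w], the [t]
   given for [p] satisfies [x_t | v]. *)
Lemma colon_var_generated s w :
  (forall p, p \in s -> exists2 t, w t < p t & gen s (mmulvar w t)) ->
  var_generated (colon (gen s) w).
Proof.
move=> var_of; exists [seq t <- enum 'I_n | has (fun p => mdiv p (mmulvar w t)) s] => v; split.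
- move=> /hasP [p ps /mdivP p_vw]; have [t wt_pt xw_in] := var_of p ps.
  exists t; first by rewrite mem_filter mem_enum andbT.
  by move: (p_vw t); rewrite ffunE => /(leq_trans wt_pt); rewrite -{1}(add0n (w t)) ltn_add2r.
- move=> [t]; rewrite mem_filter mem_enum andbT => xw_in vt_gt0.
  apply: gen_mdiv xw_in _; apply/mdivP => i; rewrite mmulvarE ffunE.
  by case: eqP => [-> | _] /=; lia.
Qed.

End Generators.

Lemma has_takeP (T : Type) (x0 : T) (a : pred T) (s : seq T) j : j <= size s ->
  reflect (exists2 i, i < j & a (nth x0 s i)) (has a (take j s)).
Proof.
move=> js; apply: (iffP (has_nthP x0)); rewrite size_takel //.
- by move=> [i ij]; rewrite nth_take //; exists i.
- by move=> [i ij]; exists i; rewrite ?nth_take.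
Qed.

Definition linear_quotient_order n (s : seq (mon n)) : Prop :=
  forall i, i < size s -> var_generated (colon (gen (take i s)) (nth (mon1 n) s i)).

Section LinearQuotientOrder.

Variables (n : nat) (L : seq (mon n)).
Hypothesis L_lq : linear_quotient_order L.
Hypothesis L_deg : {in L &, forall v w, mdeg v = mdeg w}.

Local Notation u := (nth (mon1 n) L).

Lemma lq_colon_var e i : e < i -> i < size L ->
  exists2 s, u i s < u e s & gen (take i L) (mmulvar (u i) s).
Proof.
move=> ei iL; have [V colonE] := L_lq iL.
have ue_in : u e \in take i L by rewrite -(nth_take _ ei) mem_nth // size_takel // ltnW.
have [s sV] : exists2 s, s \in V & 0 < [ffun k => u e k - u i k] s.
  apply/colonE/(gen_mem ue_in)/mdivP => k; rewrite !ffunE.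
  by rewrite addnC -leq_subLR.
rewrite ffunE subn_gt0 => uis_ues; exists s => //.
pose xs : mon n := [ffun k => nat_of_bool (k == s)].
have -> : mmulvar (u i) s = mmul xs (u i) by apply/ffunP => k; rewrite !ffunE addnC.
by apply/colonE; exists s; rewrite // ffunE eqxx.
Qed.

Definition has_two_divisors j z :=
  [exists p : 'I_j, exists q : 'I_j, [&& p != q, mdiv (u p) z & mdiv (u q) z]].

Lemma has_two_divisorsP j z :
  reflect (exists p q, [/\ p < j, q < j, p != q, mdiv (u p) z & mdiv (u q) z])
          (has_two_divisors j z).
Proof.
apply: (iffP existsP).
  by move=> [p /existsP [q /and3P [pq pz qz]]]; exists p, q; split.
move=> [p [q [pj qj pq pz qz]]].
by exists (Ordinal pj); apply/existsP; exists (Ordinal qj); apply/and3P.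
Qed.

(* Strong induction on [e]: compare [u e] with [u c] through the linear quotient of the later
   one; when the colon of [u e] is witnessed by [u c] itself, equal degrees give the exchange
   [mdiv_mmulvar_exchange]. *)
Lemma two_divisors_exchange j c w e :
  j <= size L -> c < j -> mdiv (u c) w -> ~~ has_two_divisors j w -> e < j -> e != c ->
  exists2 t, w t < u e t & has_two_divisors j (mmulvar w t).
Proof.
move=> jL cj cw one_w; elim/ltn_ind: e => e IH ej ec.
have only_c i : i < j -> mdiv (u i) w -> i = c.
  move=> ij iw; apply/eqP; apply: contraNT one_w => ic.
  by apply/has_two_divisorsP; exists i, c.
have two_with_c g t : g < j -> g != c -> mdiv (u g) (mmulvar w t) ->
    has_two_divisors j (mmulvar w t).
  move=> gj gc gw; apply/has_two_divisorsP; exists g, c; split => //.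
  exact: mdiv_trans cw (mdiv_mmulvar w t).
have cL := leq_trans cj jL; have eL := leq_trans ej jL.
case: (ltngtP e c) => [ltec | ltce | eqec]; last by rewrite eqec eqxx in ec.
- have [s ucs_ues] := lq_colon_var ltec cL.
  move=> /(has_takeP (mon1 n) _ (ltnW cL)) [f fc uf_xuc].
  have fj := ltn_trans fc cj; have fc' : f != c by rewrite ltn_eqF.
  exists s; last exact: two_with_c fj fc' (mdiv_trans uf_xuc (mdiv_mmulvar2 s cw)).
  rewrite ltnNge; apply: contra_neqN fc' => ues_ws; apply: only_c fj _.
  exact: mdiv_trans uf_xuc (mdiv_mmulvarl cw (leq_trans ucs_ues ues_ws)).
- have [s ues_ucs] := lq_colon_var ltce eL.
  move=> /(has_takeP (mon1 n) _ (ltnW eL)) [f fe uf_xue].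
  have [fE | fc] := eqVneq f c.
    have ue_w : ~~ mdiv (u e) w by apply: contra_neqN ec => /(only_c e ej) ->.
    have deg_ce : mdeg (u c) = mdeg (u e) by apply: L_deg; apply: mem_nth.
    rewrite fE in uf_xue; have [t wt_uet ue_xw] := mdiv_mmulvar_exchange deg_ce uf_xue cw ue_w.
    by exists t => //; apply: two_with_c ej ec ue_xw.
  have [t wt_uft two] := IH f fe (ltn_trans fe ej) fc.
  exists t => //; have := (mdivP _ _ uf_xue) t; have := (mdivP _ _ cw) t; rewrite mmulvarE.
  by case: (eqVneq t s) wt_uft => [-> | _] /=; lia.
Qed.

Definition hs1_block j : seq (mon n) :=
  [seq w <- map (mmulvar (u j)) (enum 'I_n) |
     has (fun v => mdiv v w) (take j L) && ~~ has_two_divisors j w].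

Definition hs1_prefix j : seq (mon n) := flatten [seq hs1_block i | i <- iota 0 j].

Lemma mem_hs1_block j w : j <= size L -> w \in hs1_block j ->
  [/\ exists k, w = mmulvar (u j) k, exists2 c, c < j & mdiv (u c) w
    & ~~ has_two_divisors j w].
Proof.
move=> jL; rewrite mem_filter => /andP [/andP [w_gen w_one] /mapP [k _ wE]].
by split => //; [exists k | apply/(has_takeP (mon1 n) (fun v => mdiv v w) jL)].
Qed.

Lemma hs1_block_uniq j : uniq (hs1_block j).
Proof. by apply/filter_uniq; rewrite map_inj_uniq ?enum_uniq //; apply: mmulvar_inj. Qed.

Lemma hs1_prefixP j w : reflect (exists2 i, i < j & w \in hs1_block i) (w \in hs1_prefix j).
Proof.
apply: (iffP flattenP).
  by move=> [b /mapP [i]]; rewrite mem_iota => /andP [_ ij] -> w_in; exists i.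
move=> [i ij w_in].
by exists (hs1_block i) => //; apply: map_f; rewrite mem_iota.
Qed.

Lemma hs1_prefixS j : hs1_prefix j.+1 = hs1_prefix j ++ hs1_block j.
Proof. by rewrite /hs1_prefix -addn1 iotaD map_cat flatten_cat; congr (_ ++ _); apply: cats0. Qed.

Lemma hs1_prefix_uniq j : j <= size L -> uniq (hs1_prefix j).
Proof.
elim: j => [_ | j IH jL]; first by [].
rewrite hs1_prefixS cat_uniq IH; last exact: ltnW.
rewrite hs1_block_uniq andbT andTb.
apply/hasPn => w /(mem_hs1_block (ltnW jL)) [_ _ one_w]; apply/negP.
move=> /hs1_prefixP [i ij /(mem_hs1_block (leq_trans (ltnW ij) (ltnW jL)))] [[k wE] [c ci cw] _].
move/has_two_divisorsP: one_w; apply; exists c, i.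
by split; [exact: ltn_trans ci ij | exact: ij | rewrite ltn_eqF | exact: cw |
           rewrite wE mdiv_mmulvar].
Qed.

Lemma gen_hs1_prefixS j z : gen (hs1_prefix j) z -> gen (hs1_prefix j.+1) z.
Proof. by rewrite hs1_prefixS; apply: gen_catl. Qed.

Lemma has_two_divisorsS j z : has_two_divisors j.+1 z ->
  has_two_divisors j z \/ exists2 r, r < j & mdiv (u r) z /\ mdiv (u j) z.
Proof.
move=> /has_two_divisorsP [p [q [+ + pq pz qz]]].
rewrite !ltnS (leq_eqVlt p) (leq_eqVlt q) => /predU1P [pE | pj] /predU1P [qE | qj].
- by rewrite pE qE eqxx in pq.
- by right; exists q; [exact: qj | rewrite -pE; split].
- by right; exists p; [exact: pj | rewrite -qE; split].
- by left; apply/has_two_divisorsP; exists p, q.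
Qed.

Lemma hs1_prefix_cover j z : j <= size L -> has_two_divisors j z -> gen (hs1_prefix j) z.
Proof.
elim: j z => [|j IH] z jL; first by move=> /has_two_divisorsP [p [q []]].
move=> /has_two_divisorsS [two_j | [r rj [rz jz]]].
  by apply/gen_hs1_prefixS/IH; first exact: ltnW.
have [s ujs_urs y_gen] := lq_colon_var rj jL.
have yz : mdiv (mmulvar (u j) s) z.
  exact: mdiv_mmulvarl jz (leq_trans ujs_urs ((mdivP _ _ rz) s)).
have [two_y | one_y] := boolP (has_two_divisors j (mmulvar (u j) s)).
  exact: gen_hs1_prefixS (gen_mdiv (IH _ (ltnW jL) two_y) yz).
apply: gen_mdiv yz; rewrite hs1_prefixS; apply/gen_catr/(gen_mem _ (mdiv_refl _)).
rewrite mem_filter; apply/andP; split; last exact: map_f (mem_enum _ s).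
by apply/andP; split; [exact: y_gen | exact: one_y].
Qed.

Lemma hs1_block_colon j i : j < size L -> i < size (hs1_block j) ->
  var_generated (colon (gen (hs1_prefix j ++ take i (hs1_block j)))
                       (nth (mon1 n) (hs1_block j) i)).
Proof.
move=> jL ib.
have [[k wE] [c cj cw] one_w] := mem_hs1_block (ltnW jL) (mem_nth (mon1 n) ib).
apply: colon_var_generated => p; rewrite mem_cat => /orP [/hs1_prefixP [j' j'j p_in] | p_in].
- have [[l pE] [i0 i0j' i0p] _] := mem_hs1_block (ltnW (ltn_trans j'j jL)) p_in.
  have [e [ej ec ep]] : exists e, [/\ e < j, e != c & mdiv (u e) p].
    have [j'c | j'c] := eqVneq j' c.
      by exists i0; split; [exact: ltn_trans i0j' j'j | rewrite -j'c ltn_eqF | exact: i0p].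
    by exists j'; split; [exact: j'j | exact: j'c | rewrite pE; apply: mdiv_mmulvar].
  have [t wt_uet two] := two_divisors_exchange (ltnW jL) cj cw one_w ej ec.
  exists t; first exact: leq_trans wt_uet ((mdivP _ _ ep) t).
  exact/gen_catl/hs1_prefix_cover/two/ltnW.
- have pw : p != nth (mon1 n) (hs1_block j) i.
    apply: contraTneq (index_ltn p_in) => ->.
    by rewrite index_uniq ?ltnn //; apply: hs1_block_uniq.
  have [[l pE] _ _] := mem_hs1_block (ltnW jL) (mem_take p_in).
  have lk : l != k by apply: contraNneq pw => lk; rewrite pE wE lk.
  exists l; first by rewrite pE wE !mmulvarE eqxx (negbTE lk) addn0 addn1.
  apply: gen_catr (gen_mem p_in _).
  by rewrite pE wE; apply/mdiv_mmulvar2/mdiv_mmulvar.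
Qed.

Lemma hs1_prefix_lq j : j <= size L -> linear_quotient_order (hs1_prefix j).
Proof.
elim: j => [_ i | j IH jL i]; first by rewrite ltn0.
rewrite hs1_prefixS size_cat => i_lt.
have [i_pre | pre_i] := ltnP i (size (hs1_prefix j)).
  by rewrite takel_cat ?(ltnW i_pre) // nth_cat i_pre; apply: IH (ltnW jL) i i_pre.
rewrite take_cat nth_cat ltnNge pre_i /=.
by apply: hs1_block_colon jL _; rewrite ltn_subLR.
Qed.

Lemma hs1_prefix_antichain j : j <= size L ->
  {in hs1_prefix j &, forall v w, mdiv v w -> v = w}.
Proof.
move=> jL v w /hs1_prefixP [i ij v_in] /hs1_prefixP [i' i'j w_in] vw.
have [[k vE] _ _] := mem_hs1_block (ltnW (leq_trans ij jL)) v_in.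
have [[l wE] _ _] := mem_hs1_block (ltnW (leq_trans i'j jL)) w_in.
apply: mdiv_eq vw _; rewrite vE wE !mdeg_mmulvar; congr _.+1.
by apply: L_deg; apply: mem_nth; [exact: leq_trans ij jL | exact: leq_trans i'j jL].
Qed.

Hypothesis L_uniq : uniq L.

Lemma hs1_prefix_pair w : w \in hs1_prefix (size L) ->
  exists g1 g2 k, [/\ g1 \in L, g2 \in L, g1 != g2, mdiv g1 w & w = mmulvar g2 k].
Proof.
move=> /hs1_prefixP [j jL /(mem_hs1_block (ltnW jL)) [[k wE] [c cj cw] _]].
have cL := ltn_trans cj jL.
exists (u c), (u j), k; split; [exact: mem_nth | exact: mem_nth | | exact: cw | exact: wE].
by rewrite nth_uniq // ltn_eqF.
Qed.

Lemma gen_hs1_prefix_pair g1 g2 z : g1 \in L -> g2 \in L -> g1 != g2 ->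
  mdiv g1 z -> mdiv g2 z -> gen (hs1_prefix (size L)) z.
Proof.
move=> g1L g2L g12 g1z g2z; apply: hs1_prefix_cover (leqnn _) _.
apply/has_two_divisorsP; exists (index g1 L), (index g2 L).
rewrite !index_mem !nth_index //; split => //.
by apply: contra_neq g12 => /(congr1 (nth (mon1 n) L)); rewrite !nth_index.
Qed.

End LinearQuotientOrder.

Section FirstSyzygies.

Variables (K : fieldType) (n : nat) (G : seq (mon n)).

Local Notation g := (nth (mon1 n) G).

Lemma in_syz_eq0 b (c : 'I_(size G) -> K) : @in_syz K n G b c ->
  (forall i1 i2 : 'I_(size G), mdiv (g i1) b -> mdiv (g i2) b -> i1 = i2) ->
  forall i, c i = 0%R.
Proof.
move=> [c_supp c_sum] one_div i; have [// | ci] := eqVneq (c i) 0%R.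
move: c_sum; rewrite (bigD1 i) //= big1 ?addr0 => [ci0 | i' i'i]; first by rewrite ci0 eqxx in ci.
apply/eqP; apply: contraNT i'i => ci'; apply/eqP.
by apply: one_div; apply: c_supp.
Qed.

Lemma betti1_nz_two_divisors a : uniq G -> betti1_nz K G a ->
  exists g1 g2, [/\ g1 \in G, g2 \in G, g1 != g2, mdiv g1 a & mdiv g2 a].
Proof.
move=> G_uniq [c [c_syz c_indec]].
have [/existsP [i1 /existsP [i2 /and3P [i12 i1a i2a]]] | none] :=
  boolP [exists i1 : 'I_(size G), exists i2 : 'I_(size G),
           [&& i1 != i2, mdiv (g i1) a & mdiv (g i2) a]].
  exists (g i1), (g i2); split; [exact: mem_nth | exact: mem_nth | | exact: i1a | exact: i2a].
  by rewrite nth_uniq.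
case: c_indec; exists (fun _ _ => 0%R); split; [|split] => //.
  by move=> k _; split => [j | ]; [rewrite eqxx | rewrite big1].
move=> j; rewrite big1 // (in_syz_eq0 c_syz) // => i1 i2 i1a i2a.
apply/eqP; apply: contraNT none => i12; apply/existsP; exists i1; apply/existsP; exists i2.
by rewrite i12 i1a i2a.
Qed.

Lemma betti1_nz_pair g1 g2 k : uniq G -> {in G &, forall v w, mdiv v w -> v = w} ->
  g1 \in G -> g2 \in G -> g1 != g2 -> mdiv g1 (mmulvar g2 k) ->
  betti1_nz K G (mmulvar g2 k).
Proof.
move=> G_uniq G_anti g1G g2G g12 g1w.
have i1_lt : index g1 G < size G by rewrite index_mem.
have i2_lt : index g2 G < size G by rewrite index_mem.
pose i1 := Ordinal i1_lt; pose i2 := Ordinal i2_lt.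
have e1 : g i1 = g1 by rewrite nth_index.
have e2 : g i2 = g2 by rewrite nth_index.
have i21 : i2 != i1 by apply: contra_neq g12 => i21; rewrite -e1 -e2 i21.
pose c j : K := ((if j == i2 then 1 else 0) - (if j == i1 then 1 else 0))%R.
exists c; split.
  split; last by rewrite sumrB -!big_mkcond !big_pred1_eq subrr.
  move=> j; rewrite /c; have [-> _ | j2] := eqVneq j i2; first by rewrite e2 mdiv_mmulvar.
  by have [-> _ | _] := eqVneq j i1; [rewrite e1 | rewrite subrr eqxx].
move=> [d [d_syz [d0 c_dec]]].
have := c_dec i2; rewrite /c eqxx (negbTE i21) subr0 big1 => [/eqP | k' _].
  by rewrite oner_eq0.
have [-> | k'k] := eqVneq k' k.
  have wk_pos : 0 < mmulvar g2 k k by rewrite mmulvarE eqxx addn1.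
  have [dk_supp dk_sum] := d_syz k wk_pos; rewrite mdivvar_mmulvar in dk_supp dk_sum.
  apply: (in_syz_eq0 (conj dk_supp dk_sum)) => j1 j2 j1g2 j2g2; apply/val_inj/eqP.
  rewrite -(nth_uniq (mon1 n) _ _ G_uniq) ?ltn_ord //.
  rewrite (G_anti _ _ (mem_nth _ (ltn_ord j1)) g2G j1g2).
  by rewrite (G_anti _ _ (mem_nth _ (ltn_ord j2)) g2G j2g2).
have [wk0 | wk_pos] := posnP (mmulvar g2 k k'); first exact: d0.
have [dk_supp _] := d_syz k' wk_pos.
apply/eqP; apply: contraT => /dk_supp; rewrite e2 => /mdivP /(_ k').
move: wk_pos; rewrite !ffunE eqxx (negbTE k'k) addn0.
by case: (g2 k') => [|m] //= _; rewrite ltnn.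
Qed.

End FirstSyzygies.

Unset Implicit Arguments.

Theorem theorem1p3 (K : fieldType) (n : nat) (I : monideal n) (G : seq (mon n)) :
  is_mingens I G ->
  (forall u w, u \in G -> w \in G -> mdeg u = mdeg w) ->
  linear_quotients I ->
  linear_quotients (HS1 K G).
Proof.
move=> G_min G_deg [L [L_min L_lq]].
have GL : G =i L.
  move=> v; apply/idP/idP => v_in.
    exact: (mingens_sub G_min L_min v_in).
  exact: (mingens_sub L_min G_min v_in).
have L_deg : {in L &, forall v w, mdeg v = mdeg w} by move=> v w; rewrite -!GL; apply: G_deg.
have [G_uniq _ G_anti] := G_min; have [L_uniq _ _] := L_min.
exists (hs1_prefix L (size L)); split; last exact: (@hs1_prefix_lq _ _ L_lq L_deg _ (leqnn _)).
split; [exact: hs1_prefix_uniq | | exact: (@hs1_prefix_antichain _ _ L_deg _ (leqnn _))].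
move=> v; split.
- move=> [a /(betti1_nz_two_divisors G_uniq) [g1 [g2 [g1G g2G g12 g1a g2a]]] av].
  by apply: gen_mdiv av; apply: (gen_hs1_prefix_pair L_lq _ _ g12 g1a g2a); rewrite -GL.
- move=> /hasP [w /(hs1_prefix_pair L_uniq) [g1 [g2 [k [g1L g2L g12 g1w wE]]]] wv].
  exists w => //; rewrite wE in g1w *.
  by apply: (betti1_nz_pair K G_uniq G_anti _ _ g12 g1w); rewrite GL.
Qed.
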